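(* Let $(\mathcal{X},d)$ be a finite metric space, $\mu\in\mathcal{M}_+(\mathcal{X})$ with $\mathbb{M}(\mu)>0$, $N\in\mathbb{N}$, and let $\hat\mu_N$ be the multinomial-model estimator. Then for every $p\ge1$, $C>0$, $$\mathbb{E}\big[\mathrm{KR}^p_{p,C}(\hat\mu_N,\mu)\big]\le\Big(\frac{C^p}{2}\sqrt{\mathbb{M}(\mu)}\sum_{x\in\mathcal{X}}\sqrt{\mu(x)}\Big)N^{-1/2}.$$
   Context: $\mathcal{M}_+(\mathcal{X})$ non-negative measures on finite $\mathcal{X}$, $\mathbb{M}(\mu)=\sum_x\mu(x)$. $\mathrm{KR}_{p,C}(\mu,\nu)=\big(\min_{\pi\in\Pi_\le(\mu,\nu)}\sum_{x,x'}d^p(x,x')\pi(x,x')+C^p(\frac{\mathbb{M}(\mu)+\mathbb{M}(\nu)}2-\mathbb{M}(\pi))\big)^{1/p}$ with $\Pi_\le(\mu,\nu)=\{\pi\in\mathcal{M}_+(\mathcal{X}\times\mathcal{X}):\sum_{x'}\pi(x,x')\le\mu(x),\sum_x\pi(x,x')\le\nu(x')\}$. Multinomial model: $X_1,\dots,X_N$ i.i.d. with law $\mu/\mathbb{M}(\mu)$ and $\hat\mu_N=\frac{\mathbb{M}(\mu)}{N}\sum_{x\in\mathcal{X}}|\{k:X_k=x\}|\,\delta_x$. *)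

From HB Require Import structures.
From mathcomp Require Import all_boot all_order all_algebra.
From mathcomp Require Import all_classical all_reals all_analysis.
Set Implicit Arguments. Unset Strict Implicit. Unset Printing Implicit Defensive.
Import Order.TTheory GRing.Theory Num.Theory.
Local Open Scope classical_set_scope.
Local Open Scope ring_scope.

Definition is_metric (R : realType) (X : finType) (d : X -> X -> R) : Prop :=
  (forall x y, 0 <= d x y) /\ (forall x y, d x y = 0 <-> x = y) /\
  (forall x y, d x y = d y x) /\ (forall x y z, d x z <= d x y + d y z).

Definition mass (R : realType) (X : finType) (mu : X -> R) : R := \sum_(x : X) mu x.

Definition subcoupling (R : realType) (X : finType) (mu nu : X -> R)
  (pi : X -> X -> R) : Prop :=
  (forall x x', 0 <= pi x x') /\
  (forall x, \sum_(x' : X) pi x x' <= mu x) /\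
  (forall x', \sum_(x : X) pi x x' <= nu x').

Definition KR_obj (R : realType) (X : finType) (d : X -> X -> R) (p C : R)
  (mu nu : X -> R) (pi : X -> X -> R) : R :=
  \sum_(x : X) \sum_(x' : X) (d x x' `^ p) * pi x x'
  + (C `^ p) * ((mass mu + mass nu) / 2 - \sum_(x : X) \sum_(x' : X) pi x x').

(* KR_{p,C}(mu,nu)^p : the minimum (= infimum, attained) of the objective *)
Definition KRp (R : realType) (X : finType) (d : X -> X -> R) (p C : R)
  (mu nu : X -> R) : R :=
  inf [set c | exists pi, subcoupling mu nu pi /\ c = KR_obj d p C mu nu pi].

Definition KR (R : realType) (X : finType) (d : X -> X -> R) (p C : R)
  (mu nu : X -> R) : R := KRp d p C mu nu `^ (p^-1).

(* multinomial-model empirical measure from a sample t : 'I_N -> X *)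
Definition emp_measure (R : realType) (X : finType) (mu : X -> R) (N : nat)
  (t : {ffun 'I_N -> X}) : X -> R :=
  fun x => mass mu / N%:R * #|[set k | t k == x]|%:R.

(* expectation over X_1..X_N i.i.d. with law mu / M(mu) *)
Definition sample_expect (R : realType) (X : finType) (mu : X -> R) (N : nat)
  (f : {ffun 'I_N -> X} -> R) : R :=
  \sum_(t : {ffun 'I_N -> X}) (\prod_(k < N) (mu (t k) / mass mu)) * f t.

From HB Require Import structures.
From mathcomp Require Import all_boot all_order all_algebra.
From mathcomp Require Import all_classical all_reals all_analysis.
From mathcomp Require Import ring lra.
Import Order.TTheory GRing.Theory Num.Theory.
Local Open Scope ring_scope.

(* The diagonal subcoupling x |-> min (mu x) (nu x) shows that KR^p_{p,C}(mu,nu) is at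
   most C^p/2 times the l1 distance of mu and nu, so it suffices to bound
   E |mu_N(x) - mu(x)| for each x.  By Jensen this is at most the standard deviation of
   mu_N(x) = M/N * Binomial(N, mu(x)/M), that is sqrt (M mu(x) (1 - mu(x)/M) / N). *)

Section ExpectAbsLeSqrt.
Variables (R : realType) (I : finType) (w : I -> R).
Hypotheses (w_ge0 : forall i, 0 <= w i) (w_sum1 : \sum_i w i = 1).

Lemma expect_abs_le_sqrt (Y : I -> R) :
  \sum_i w i * `|Y i| <= Num.sqrt (\sum_i w i * Y i ^+ 2).
Proof.
set m := \sum_i w i * `|Y i|.
have m_ge0 : 0 <= m by apply: sumr_ge0 => i _; rewrite mulr_ge0.
have var_ge0 : 0 <= \sum_i w i * (`|Y i| - m) ^+ 2.
  by apply: sumr_ge0 => i _; rewrite mulr_ge0 // sqr_ge0.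
have varE : \sum_i w i * (`|Y i| - m) ^+ 2 = \sum_i w i * Y i ^+ 2 - m ^+ 2.
  transitivity (\sum_i (w i * Y i ^+ 2 - 2 * m * (w i * `|Y i|) + m ^+ 2 * w i)).
    by apply: eq_bigr => i _; rewrite -[Y i ^+ 2]real_normK ?num_real //; ring.
  by rewrite big_split /= sumrB -!mulr_sumr w_sum1 -/m; ring.
rewrite -(ger0_norm m_ge0) -sqrtr_sqr; apply: ler_wsqrtr; lra.
Qed.

End ExpectAbsLeSqrt.

Lemma mean_sub_min (R : realType) (a b : R) : (a + b) / 2 - Num.min a b = `|a - b| / 2.
Proof.
rewrite /Num.min; case: (ltP a b) => h.
  by rewrite ltr0_norm ?subr_lt0 //; lra.
by rewrite ger0_norm ?subr_ge0 //; lra.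
Qed.

Section KRBoundedByL1.
Variables (R : realType) (X : finType) (d : X -> X -> R) (p C : R).
Variables (mu nu : X -> R).
Hypotheses (mu_ge0 : forall x, 0 <= mu x) (nu_ge0 : forall x, 0 <= nu x).

Lemma KR_obj_ge0 pi : subcoupling mu nu pi -> 0 <= KR_obj d p C mu nu pi.
Proof.
move=> [pi_ge0 [pi_mu pi_nu]]; apply: addr_ge0.
  by apply: sumr_ge0 => x _; apply: sumr_ge0 => y _; rewrite mulr_ge0 ?powR_ge0.
apply: mulr_ge0; first exact: powR_ge0.
have le_mu : \sum_x \sum_y pi x y <= mass mu by apply: ler_sum => x _; exact: pi_mu.
have le_nu : \sum_x \sum_y pi x y <= mass nu.
  by rewrite exchange_big; apply: ler_sum => y _; exact: pi_nu.
lra.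
Qed.

Lemma KRp_le_obj pi : subcoupling mu nu pi -> KRp d p C mu nu <= KR_obj d p C mu nu pi.
Proof.
move=> pi_sub; apply: ge_inf; last by exists pi.
by exists 0 => c [pi' [pi'_sub ->]]; exact: KR_obj_ge0.
Qed.

Lemma KRp_ge0 : 0 <= KRp d p C mu nu.
Proof.
have sub0 : subcoupling mu nu (fun _ _ => 0) by split=> //; split=> x; rewrite big1.
apply: lb_le_inf; first by exists (KR_obj d p C mu nu (fun _ _ => 0)), (fun _ _ => 0).
by move=> c [pi [pi_sub ->]]; exact: KR_obj_ge0.
Qed.

Lemma KR_powR : p != 0 -> KR d p C mu nu `^ p = KRp d p C mu nu.
Proof. by move=> p0; rewrite /KR -powRrM mulVf // powRr1 // KRp_ge0. Qed.

Definition min_diag (x x' : X) : R := if x' == x then Num.min (mu x) (nu x) else 0.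

Lemma subcoupling_min_diag : subcoupling mu nu min_diag.
Proof.
split; first by move=> x y; rewrite /min_diag; case: eqP => _ //; rewrite le_min mu_ge0 nu_ge0.
split=> x; rewrite /min_diag.
  by rewrite -big_mkcond big_pred1_eq ge_min lexx.
rewrite (eq_bigr (fun y => if y == x then Num.min (mu y) (nu y) else 0)).
  by rewrite -big_mkcond big_pred1_eq ge_min lexx orbT.
by move=> y _; rewrite eq_sym; case: eqP => // ->.
Qed.

Lemma KR_obj_min_diag : (forall x, d x x = 0) -> p != 0 ->
  KR_obj d p C mu nu min_diag = C `^ p / 2 * \sum_x `|mu x - nu x|.
Proof.
move=> d_diag p0; rewrite /KR_obj big1 ?add0r; last first.
  move=> x _; apply: big1 => y _; rewrite /min_diag; case: eqP => [->|_].
    by rewrite d_diag powR0 // mul0r.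
  by rewrite mulr0.
under eq_bigr do rewrite /min_diag -big_mkcond big_pred1_eq.
rewrite -mulrA mulr_sumr /mass -big_split /= mulr_suml -sumrB; congr (_ * _).
by apply: eq_bigr => x _; rewrite mean_sub_min mulrC.
Qed.

Lemma KR_powR_le_l1 : (forall x, d x x = 0) -> p != 0 ->
  KR d p C mu nu `^ p <= C `^ p / 2 * \sum_x `|mu x - nu x|.
Proof.
move=> d_diag p0; rewrite KR_powR // -KR_obj_min_diag //.
exact/KRp_le_obj/subcoupling_min_diag.
Qed.

End KRBoundedByL1.

Lemma card_set_eq_sum_indicator (R : realType) (X : finType) (N : nat)
    (t : {ffun 'I_N -> X}) (x : X) :
  (#|[set k | t k == x]%classic|%:R : R) = \sum_(k < N) (t k == x)%:R.
Proof.
rewrite -sum1_card natr_sum big_mkcond /=; apply: eq_bigr => k _.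
case: ifP => [/set_mem /= ->//|]; case: (boolP (t k == x)) => // tkx /negP[].
exact: mem_set.
Qed.

Section MultinomialSample.
Variables (R : realType) (X : finType) (mu : X -> R) (N : nat).
Hypotheses (mu_ge0 : forall x, 0 <= mu x) (mass_gt0 : 0 < mass mu).

Local Notation E := (@sample_expect R X mu N).

Lemma sum_law : \sum_y mu y / mass mu = 1.
Proof. by rewrite -mulr_suml divff // gt_eqF. Qed.

Lemma sample_weight_ge0 (t : {ffun 'I_N -> X}) : 0 <= \prod_(k < N) (mu (t k) / mass mu).
Proof. by apply: prodr_ge0 => k _; rewrite divr_ge0 // ltW. Qed.

Lemma sample_expect_prod (G : 'I_N -> X -> R) :
  E (fun t => \prod_(k < N) G k (t k)) = \prod_(k < N) \sum_y mu y / mass mu * G k y.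
Proof.
rewrite /sample_expect bigA_distr_bigA /=; apply: eq_bigr => t _.
by rewrite -big_split.
Qed.

Lemma sample_expect1 : E (fun => 1) = 1.
Proof.
transitivity (E (fun t => \prod_(k < N) (fun _ _ => 1) k (t k))).
  by apply: eq_bigr => t _; rewrite big1_eq.
rewrite (sample_expect_prod (fun _ _ => 1)); apply: big1 => k _.
by under eq_bigr do rewrite mulr1; rewrite sum_law.
Qed.

Lemma sample_expect_le (f g : {ffun 'I_N -> X} -> R) :
  (forall t, f t <= g t) -> E f <= E g.
Proof.
by move=> fg; apply: ler_sum => t _; apply: ler_wpM2l; [exact: sample_weight_ge0|].
Qed.

Lemma sample_expectZ (c : R) (f : {ffun 'I_N -> X} -> R) :
  E (fun t => c * f t) = c * E f.
Proof. by rewrite /sample_expect mulr_sumr; apply: eq_bigr => t _; ring. Qed.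

Lemma sample_expect_sum (I : finType) (F : I -> {ffun 'I_N -> X} -> R) :
  E (fun t => \sum_i F i t) = \sum_i E (F i).
Proof.
rewrite /sample_expect exchange_big /=; apply: eq_bigr => t _.
by rewrite mulr_sumr.
Qed.

Lemma sample_expect_abs_le_sqrt (f : {ffun 'I_N -> X} -> R) :
  E (fun t => `|f t|) <= Num.sqrt (E (fun t => f t ^+ 2)).
Proof.
apply: expect_abs_le_sqrt; first exact: sample_weight_ge0.
by rewrite -[RHS]sample_expect1; apply: eq_bigr => t _; rewrite mulr1.
Qed.

Section CenteredIndicator.
Variable x : X.
Let q := mu x / mass mu.
Let dev (y : X) : R := (y == x)%:R - q.

Lemma sum_indicator_mul (f : X -> R) : \sum_y f y * (y == x)%:R = f x.
Proof.
rewrite (bigD1 x) //= eqxx mulr1 big1 ?addr0 // => y /negbTE ->.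
by rewrite mulr0.
Qed.

Lemma sum_law_dev : \sum_y mu y / mass mu * dev y = 0.
Proof.
under eq_bigr do rewrite mulrBr.
by rewrite sumrB sum_indicator_mul -mulr_suml sum_law mul1r subrr.
Qed.

Lemma sum_law_dev_sqr : \sum_y mu y / mass mu * (dev y * dev y) = q - q ^+ 2.
Proof.
transitivity (\sum_y (mu y / mass mu * dev y * (y == x)%:R - q * (mu y / mass mu * dev y))).
  by apply: eq_bigr => y _; rewrite /dev; ring.
rewrite sumrB sum_indicator_mul -mulr_sumr sum_law_dev /dev eqxx /=.
by rewrite -/q; ring.
Qed.

Lemma sample_expect_dev_mul (k l : 'I_N) :
  E (fun t => dev (t k) * dev (t l)) = if k == l then q - q ^+ 2 else 0.
Proof.
pose G i y := (if i == k then dev y else 1) * (if i == l then dev y else 1).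
have prod_if (j : 'I_N) (F : 'I_N -> R) : \prod_(i < N) (if i == j then F i else 1) = F j.
  by rewrite -big_mkcond big_pred1_eq.
transitivity (E (fun t => \prod_(i < N) G i (t i))).
  apply: eq_bigr => t _; congr (_ * _); rewrite /G big_split /=.
  by rewrite (prod_if k (fun i => dev (t i))) (prod_if l (fun i => dev (t i))).
rewrite sample_expect_prod /G; case: (eqVneq k l) => [<-|neq_kl].
  rewrite -(prod_if k (fun _ => q - q ^+ 2)); apply: eq_bigr => i _.
  case: eqP => _; first exact: sum_law_dev_sqr.
  by under eq_bigr do rewrite !mulr1; rewrite sum_law.
rewrite (bigD1 k) //= eqxx (negbTE neq_kl).
by under eq_bigr do rewrite !mulr1; rewrite sum_law_dev mul0r.
Qed.

Lemma sample_expect_sum_dev_sqr :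
  E (fun t => (\sum_(k < N) dev (t k)) ^+ 2) = N%:R * (q - q ^+ 2).
Proof.
transitivity (E (fun t => \sum_(k < N) \sum_(l < N) dev (t k) * dev (t l))).
  apply: eq_bigr => t _; congr (_ * _); rewrite expr2 mulr_suml.
  by apply: eq_bigr => k _; rewrite mulr_sumr.
rewrite sample_expect_sum mulr_natl -[X in _ *+ X](card_ord N) -sumr_const.
apply: eq_bigr => k _; rewrite sample_expect_sum.
under eq_bigr do rewrite sample_expect_dev_mul.
by rewrite -big_mkcond (eq_bigl (pred1 k)) ?big_pred1_eq // => l; rewrite eq_sym.
Qed.

Hypothesis N_gt0 : (0 < N)%N.

Lemma emp_measure_subE (t : {ffun 'I_N -> X}) :
  emp_measure mu t x - mu x = mass mu / N%:R * \sum_(k < N) dev (t k).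
Proof.
rewrite /emp_measure card_set_eq_sum_indicator /dev sumrB sumr_const card_ord.
rewrite mulrBr -mulr_natl /q; congr (_ - _); field.
by rewrite pnatr_eq0 -lt0n N_gt0 gt_eqF.
Qed.

Lemma sample_expect_emp_dev_sqr :
  E (fun t => (emp_measure mu t x - mu x) ^+ 2) = (mass mu * mu x - mu x ^+ 2) / N%:R.
Proof.
transitivity (E (fun t => (mass mu / N%:R) ^+ 2 * (\sum_(k < N) dev (t k)) ^+ 2)).
  by apply: eq_bigr => t _; rewrite emp_measure_subE exprMn.
rewrite sample_expectZ sample_expect_sum_dev_sqr /q; field.
by rewrite pnatr_eq0 -lt0n N_gt0 gt_eqF.
Qed.

Lemma sample_expect_emp_dev_abs :
  E (fun t => `|emp_measure mu t x - mu x|)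
  <= Num.sqrt (mass mu) * Num.sqrt (mu x) / Num.sqrt N%:R.
Proof.
apply: le_trans (sample_expect_abs_le_sqrt _) _.
rewrite sample_expect_emp_dev_sqr -sqrtrM ?(ltW mass_gt0) // -sqrtrV ?ler0n //.
rewrite -sqrtrM ?mulr_ge0 ?(ltW mass_gt0) //; apply: ler_wsqrtr.
by rewrite ler_wpM2r ?invr_ge0 ?ler0n // gerBl sqr_ge0.
Qed.

End CenteredIndicator.
End MultinomialSample.

Theorem lemmaA1 (R : realType) (X : finType) (d : X -> X -> R)
  (mu : X -> R) (N : nat) (p C : R) :
  is_metric d ->
  (forall x, 0 <= mu x) -> 0 < mass mu ->
  (1 <= N)%N -> 1 <= p -> 0 < C ->
  sample_expect mu (fun t : {ffun 'I_N -> X} => KR d p C (emp_measure mu t) mu `^ p)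
  <= (C `^ p / 2 * Num.sqrt (mass mu) * \sum_(x : X) Num.sqrt (mu x))
     / Num.sqrt (N%:R).
Proof.
move=> [_ [d_eq0 _]] mu_ge0 mass_gt0 N_gt0 p_ge1 _.
have p_neq0 : p != 0 by rewrite gt_eqF // (lt_le_trans ltr01 p_ge1).
have emp_ge0 t x : 0 <= emp_measure mu t x by rewrite mulr_ge0 // divr_ge0 // ltW.
set c := C `^ p / 2.
apply: (le_trans (y := sample_expect mu
          (fun t => c * \sum_x `|emp_measure mu t x - mu x|))).
  apply: sample_expect_le => // t; apply: KR_powR_le_l1 => // x.
  exact: (d_eq0 x x).2.
rewrite sample_expectZ // sample_expect_sum // -2!mulrA.
apply: ler_wpM2l; first by rewrite divr_ge0 ?powR_ge0.
rewrite mulr_suml mulr_sumr; apply: ler_sum => x _; rewrite mulrA.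
exact: sample_expect_emp_dev_abs.
Qed.
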